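(* Let $a<b$ and $f\in C([a,b])$. Then for every $\varepsilon>0$ there exists a function $\phi$ generated by a $\sigma$-activated network with width $36$ and depth $5$ such that $|\phi(x)-f(x)|<\varepsilon$ for all $x\in[a,b]$.
   Context: Let $\sigma_1:\mathbb{R}\to\mathbb{R}$ be the continuous triangular-wave function of period $2$: $\sigma_1(x)=|x|$ for $x\in[-1,1]$, $\sigma_1(x+2)=\sigma_1(x)$. Let $\sigma_2(x)=x/(|x|+1)$. The activation function is $\sigma(x)=\sigma_1(x)$ for $x\ge0$ and $\sigma(x)=\sigma_2(x)$ for $x<0$, applied entrywise. A function generated by a $\sigma$-activated network with input dimension $n$, width $N$ and depth $L$ is a function of the form $\mathcal{L}_{\ell}\circ\sigma\circ\mathcal{L}_{\ell-1}\circ\cdots\circ\sigma\circ\mathcal{L}_0$ with $\ell\le L$ hidden layers, where $\mathcal{L}_0:\mathbb{R}^n\to\mathbb{R}^{N_1}$, $\mathcal{L}_i:\mathbb{R}^{N_i}\to\mathbb{R}^{N_{i+1}}$, $\mathcal{L}_\ell:\mathbb{R}^{N_\ell}\to\mathbb{R}$ are affine maps and each $N_i\le N$. *)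

From Stdlib Require Import Reals List.
Open Scope R_scope.

(* Triangular wave of period 2: |x| on [-1,1], extended 2-periodically.
   x - 2*floor((x+1)/2) lies in [-1,1) and differs from x by a multiple of 2. *)
Definition sigma1 (x : R) : R :=
  Rabs (x - 2 * IZR (Int_part ((x + 1) / 2))).

Definition sigma2 (x : R) : R := x / (Rabs x + 1).

Definition sigma (x : R) : R :=
  if Rle_dec 0 x then sigma1 x else sigma2 x.

Fixpoint fsum (m : nat) (f : nat -> R) : R :=
  match m with
  | O => 0
  | S m' => fsum m' f + f m'
  end.

(* An affine map R^m -> R^k is given by weights W i j and biases b i;
   vectors are represented as nat -> R, only the first m entries are read. *)
Record layer := mkLayer { lW : nat -> nat -> R; lb : nat -> R }.

Definition affine (m : nat) (L : layer) (x : nat -> R) : nat -> R :=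
  fun i => fsum m (fun j => lW L i j * x j) + lb L i.

(* Hidden layers: a list of (output width N_i, affine map); each followed by
   the entrywise activation sigma. Returns the final width and vector. *)
Fixpoint eval_hidden (m : nat) (hs : list (nat * layer)) (x : nat -> R)
  : nat * (nat -> R) :=
  match hs with
  | nil => (m, x)
  | (k, L) :: hs' => eval_hidden k hs' (fun i => sigma (affine m L x i))
  end.

Definition sigma_net (n N L : nat) (g : (nat -> R) -> R) : Prop :=
  exists (hs : list (nat * layer)) (Lout : layer),
    (length hs <= L)%nat /\
    Forall (fun p => (fst p <= N)%nat) hs /\
    forall x, g x = affine (fst (eval_hidden n hs x)) Lout
                           (snd (eval_hidden n hs x)) 0%nat.

Definition cont_on_interval (f : R -> R) (a b : R) : Prop :=
  forall x, a <= x <= b -> limit1_in f (fun y => a <= y <= b) (f x) x.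

(* After an affine change of variable the input [t] ranges over [[0, J]], and [f]
   is replaced by its values at the integers [j <= J], rescaled into [[0, 1]].
   The triangular wave computes fractional parts: [sigma1 (2 N / q) = 2 r / q]
   when [N = q k + r] and [2 r <= q].  With pairwise coprime moduli
   [q_j = 1 + M (j + 1)] and [N] given by the Chinese remainder theorem, the
   single number [sigma1 (2 N / q_j)] approximates the prescribed value at every
   [j] simultaneously, within [2 / q_j].  A small network recovers [q_j] from [t]
   on [[j + 1/8, j + 7/8]]; two copies, evaluated at [t] and [t + 1/2], are glued
   by a switch built from the wave, using ReLUs that sigma emulates on a bounded
   range.  The output therefore always lies between the values at grid points
   within distance 1 of [t], which uniform continuity makes close to [f x]. *)

From Pilot Require Import Defs.
From Stdlib Require Import Reals Lra Lia ZArith Znumtheory List.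
Import ListNotations.
(* [Reals] has its own [sigma]; importing [Defs] again makes [sigma] the activation. *)
Import Defs.

Open Scope Z_scope.

Lemma Zdivide_fact (n k : nat) : (1 <= k <= n)%nat -> (Z.of_nat k | Z.of_nat (fact n)).
Proof.
  induction n as [|n IH]; intros Hk; [lia|].
  change (fact (S n)) with (S n * fact n)%nat. rewrite Nat2Z.inj_mul.
  destruct (Nat.eq_dec k (S n)) as [->|Hne].
  - apply Z.divide_factor_l.
  - apply Z.divide_mul_r, IH. lia.
Qed.

Definition modulus (M : Z) (j : nat) : Z := 1 + M * (Z.of_nat j + 1).

Lemma modulus_rel_prime (M : Z) (J : nat) :
  (forall k, (1 <= k <= J)%nat -> (Z.of_nat k | M)) ->
  forall i j, (i < j)%nat -> (j <= J)%nat -> rel_prime (modulus M i) (modulus M j).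
Proof.
  intros HM i j Hij HjJ. apply Zis_gcd_intro; try apply Z.divide_1_l.
  intros d Hi Hj.
  assert (Hdij : (d | Z.of_nat (j - i))).
  { replace (Z.of_nat (j - i)) with
      (modulus M i * (Z.of_nat j + 1) - modulus M j * (Z.of_nat i + 1))
      by (unfold modulus; rewrite Nat2Z.inj_sub by lia; ring).
    apply Z.divide_sub_r; apply Z.divide_mul_l; assumption. }
  assert (HdM : (d | M)) by (apply Z.divide_trans with (Z.of_nat (j - i)); [exact Hdij | apply HM; lia]).
  replace 1 with (modulus M i - M * (Z.of_nat i + 1)) by (unfold modulus; ring).
  apply Z.divide_sub_r; [exact Hi | now apply Z.divide_mul_l].
Qed.

Section ChineseRemainder.

Variables (q r : nat -> Z) (L : nat).
Hypothesis q_pos : forall i, 0 < q i.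
Hypothesis q_rel_prime : forall i j, (i < j)%nat -> (j <= L)%nat -> rel_prime (q i) (q j).

Fixpoint prod_q (n : nat) : Z := match n with O => 1 | S n => prod_q n * q n end.

Lemma prod_q_pos n : 0 < prod_q n.
Proof. induction n; simpl; [lia | pose proof (q_pos n); nia]. Qed.

Lemma divide_prod_q n i : (i < n)%nat -> (q i | prod_q n).
Proof.
  induction n as [|n IH]; intros Hi; [lia|]. simpl.
  destruct (Nat.eq_dec i n) as [->|Hne].
  - apply Z.divide_factor_r.
  - apply Z.divide_mul_l, IH. lia.
Qed.

Lemma rel_prime_prod_q n : (n <= L)%nat -> rel_prime (q n) (prod_q n).
Proof.
  intros Hn. enough (forall m, (m <= n)%nat -> rel_prime (q n) (prod_q m)) by auto.
  induction m as [|m IH]; intros Hm; simpl.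
  - apply rel_prime_sym, rel_prime_1.
  - apply rel_prime_mult; [apply IH; lia | apply rel_prime_sym, q_rel_prime; lia].
Qed.

Lemma chinese_remainder n : (n <= S L)%nat ->
  exists N, 0 <= N /\ forall i, (i < n)%nat -> exists k, N = q i * k + r i.
Proof.
  induction n as [|n IH]; intros Hn.
  - exists 0. split; [lia | intros; lia].
  - destruct IH as [N [HN HNr]]; [lia|].
    destruct (rel_prime_bezout _ _ (rel_prime_sym _ _ (rel_prime_prod_q n ltac:(lia))))
      as [u v Huv].
    set (P := prod_q n) in *.
    set (s := (u * (r n - N)) mod q n).
    pose proof (Z.mod_pos_bound (u * (r n - N)) (q n) (q_pos n)).
    pose proof (prod_q_pos n).
    (* [u P = 1 (mod q n)], so adding [P s] moves [N] to the residue [r n]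
       modulo [q n] without changing its residues modulo the earlier moduli. *)
    exists (N + P * s). split; [nia|].
    intros i Hi. destruct (Nat.eq_dec i n) as [->|Hne].
    + pose proof (Z_div_mod_eq_full (u * (r n - N)) (q n)) as Hdm.
      set (D := u * (r n - N) / q n) in *.
      exists (- v * (r n - N) - P * D).
      replace s with (u * (r n - N) - q n * D) by lia.
      assert (Hu : u * P = 1 - v * q n) by lia.
      transitivity (N + (u * P) * (r n - N) - P * q n * D); [ring|].
      rewrite Hu. ring.
    + destruct (HNr i ltac:(lia)) as [k Hk].
      destruct (divide_prod_q n i ltac:(lia)) as [c Hc].
      exists (k + c * s). fold P in Hc. rewrite Hk, Hc. ring.
Qed.

End ChineseRemainder.

Close Scope Z_scope.

Lemma sigma1_floor (y : R) :
  -1 <= y - 2 * IZR (Int_part ((y + 1) / 2)) < 1.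
Proof. destruct (base_Int_part ((y + 1) / 2)). lra. Qed.

Lemma sigma1_tooth (y : R) (n : Z) :
  -1 <= y - 2 * IZR n <= 1 -> sigma1 y = Rabs (y - 2 * IZR n).
Proof.
  intros Hn. unfold sigma1. pose proof (sigma1_floor y) as Hk.
  revert Hk. generalize (Int_part ((y + 1) / 2)). intros k Hk.
  assert (Hlo : IZR (k - n) > -1) by (rewrite minus_IZR; lra).
  assert (Hhi : IZR (k - n) <= 1) by (rewrite minus_IZR; lra).
  apply lt_IZR in Hlo. apply le_IZR in Hhi.
  assert (k = n \/ k = (n + 1)%Z) as [->| ->] by lia; [reflexivity|].
  rewrite plus_IZR in *.
  rewrite (Rabs_left1 (y - 2 * (IZR n + 1))), Rabs_pos_eq by lra. lra.
Qed.

Lemma sigma1_range (y : R) : 0 <= sigma1 y <= 1.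
Proof.
  pose proof (sigma1_floor y). unfold sigma1.
  unfold Rabs; destruct Rcase_abs; lra.
Qed.

Lemma sigma_nonneg (y : R) : 0 <= y -> sigma y = sigma1 y.
Proof. intros Hy. unfold sigma. destruct Rle_dec; [reflexivity | lra]. Qed.

Lemma sigma_nonpos (y : R) : y <= 0 -> sigma y = y / (1 - y).
Proof.
  intros Hy. unfold sigma. destruct Rle_dec.
  - replace y with 0 by lra.
    rewrite (sigma1_tooth 0 0) by (simpl; lra).
    replace (0 - 2 * IZR 0) with 0 by (simpl; ring). rewrite Rabs_R0. lra.
  - unfold sigma2. rewrite Rabs_left by lra. f_equal. ring.
Qed.

Lemma sigma_range (y : R) : 0 <= y -> 0 <= sigma y <= 1.
Proof. intros Hy. rewrite sigma_nonneg by exact Hy. apply sigma1_range. Qed.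

Lemma sigma_id (y : R) : 0 <= y <= 1 -> sigma y = y.
Proof.
  intros Hy. rewrite sigma_nonneg, (sigma1_tooth y 0) by (simpl; lra).
  simpl. rewrite Rmult_0_r, Rminus_0_r. apply Rabs_pos_eq. lra.
Qed.

Lemma sigma_tooth (y : R) (n : nat) :
  0 <= y -> -1 <= y - 2 * INR n <= 1 -> sigma y = Rabs (y - 2 * INR n).
Proof. rewrite INR_IZR_INZ. intros. rewrite sigma_nonneg by lra. now apply sigma1_tooth. Qed.

Ltac solve_abs := unfold Rabs; repeat destruct Rcase_abs; rewrite ?S_INR, ?INR_0 in *; lra.
Ltac rewrite_tooth y n := rewrite (sigma_tooth y n) by solve_abs.

(* On [j + 1/8, j + 7/8] the three shifted waves are linear with a common slope
   and the combination equals 4 + (s - j) or 4 - (s - j); the outer wave folds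
   both cases to s - j. *)
Definition frac_net (s : R) : R :=
  sigma (2 * sigma (s + 17/8) - 2 * sigma (s + 15/8) + sigma (s + 2) + 7/2).

Lemma frac_net_range (s : R) : 0 <= s -> 0 <= frac_net s <= 1.
Proof.
  intros Hs. apply sigma_range.
  pose proof (sigma_range (s + 17/8)). pose proof (sigma_range (s + 15/8)).
  pose proof (sigma_range (s + 2)). lra.
Qed.

Lemma frac_net_eq (s : R) (j : nat) :
  INR j + 1/8 <= s <= INR j + 7/8 -> frac_net s = s - INR j.
Proof.
  intros Hs. unfold frac_net.
  destruct (Nat.Even_or_Odd j) as [[n ->]|[n ->]];
    rewrite ?plus_INR, mult_INR in Hs |- *; simpl (INR 2) in *; simpl (INR 1) in *;
    pose proof (pos_INR n).
  - rewrite_tooth (s + 17/8) (S n). rewrite_tooth (s + 15/8) (S n).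
    rewrite_tooth (s + 2) (S n).
    rewrite (sigma_tooth _ 2) by solve_abs. solve_abs.
  - rewrite_tooth (s + 17/8) (S (S n)). rewrite_tooth (s + 15/8) (S (S n)).
    rewrite_tooth (s + 2) (S (S n)).
    rewrite (sigma_tooth _ 2) by solve_abs. solve_abs.
Qed.

Lemma Rdiv_lt_swap (x y z : R) : 0 < y -> 0 < z -> x / z < y -> x / y < z.
Proof.
  intros Hy Hz Hxz. apply Rmult_lt_reg_r with y; [exact Hy|].
  apply Rmult_lt_compat_r with (r := z) in Hxz; [|exact Hz].
  replace (x / z * z) with x in Hxz by (field; lra).
  replace (x / y * y) with x by (field; lra). lra.
Qed.

Lemma sigma1_decode (q k : Z) (z : R) : (0 < q)%Z -> 0 <= z <= 1 ->
  Rabs (sigma1 (2 * IZR (q * k + Int_part (z * IZR q / 2)) / IZR q) - z) <= 2 / IZR q.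
Proof.
  intros Hq Hz. set (r := Int_part (z * IZR q / 2)).
  assert (Hqr : 0 < IZR q) by (apply IZR_lt; exact Hq).
  destruct (base_Int_part (z * IZR q / 2)) as [Hr1 Hr2]. fold r in Hr1, Hr2.
  assert (Hr : 0 <= 2 * IZR r / IZR q <= z /\ z - 2 / IZR q < 2 * IZR r / IZR q).
  { assert (0 <= z * IZR q / 2) by (apply Rmult_le_pos; [apply Rmult_le_pos|]; lra).
    assert (Hr0 : 0 <= IZR r).
    { assert (Hgt : (-1 < r)%Z) by (apply lt_IZR; lra). apply IZR_le. lia. }
    repeat split.
    - apply Rmult_le_pos; [lra | apply Rlt_le, Rinv_0_lt_compat, Hqr].
    - apply Rmult_le_reg_r with (IZR q); [exact Hqr|]. field_simplify; lra.
    - apply Rmult_lt_reg_r with (IZR q); [exact Hqr|]. field_simplify; lra. }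
  replace (2 * IZR (q * k + r) / IZR q) with (2 * IZR r / IZR q + 2 * IZR k)
    by (rewrite plus_IZR, mult_IZR; field; lra).
  rewrite (sigma1_tooth _ k) by lra.
  replace (2 * IZR r / IZR q + 2 * IZR k - 2 * IZR k) with (2 * IZR r / IZR q) by ring.
  solve_abs.
Qed.

Definition grid_value (N M : R) (j : nat) : R := sigma1 (2 * N / (1 + M * (INR j + 1))).

(* The moduli [1 + M (j + 1)] are pairwise coprime once [J!] divides [M], so
   one [N] can encode all targets at once by the Chinese remainder theorem. *)
Lemma grid_values_interpolate (J : nat) (z : nat -> R) (eta : R) :
  0 < eta -> (forall j, (j <= J)%nat -> 0 <= z j <= 1) ->
  exists N M, 0 <= N /\ 0 <= M /\
    forall j, (j <= J)%nat -> Rabs (grid_value N M j - z j) < eta.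
Proof.
  intros Heta Hz. destruct (INR_unbounded (2 / eta)) as [m Hm].
  set (M := (Z.of_nat m * Z.of_nat (fact J))%Z).
  assert (HMdiv : forall k, (1 <= k <= J)%nat -> (Z.of_nat k | M)%Z)
    by (intros k Hk; apply Z.divide_mul_r, Zdivide_fact, Hk).
  assert (Hq : forall j, (0 < modulus M j)%Z) by (intros; unfold modulus; lia).
  destruct (chinese_remainder (modulus M) (fun j => Int_part (z j * IZR (modulus M j) / 2))
              J Hq (modulus_rel_prime M J HMdiv) (S J) (le_n _)) as [N [HN0 HN]].
  assert (HmM : INR m <= IZR M).
  { unfold M. rewrite mult_IZR, <- !INR_IZR_INZ.
    pose proof (le_INR 1 _ (lt_O_fact J)). pose proof (pos_INR m). simpl in *. nra. }
  exists (IZR N), (IZR M). repeat split; [apply IZR_le; lia | apply IZR_le; lia |].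
  intros j Hj. destruct (HN j ltac:(lia)) as [k ->].
  unfold grid_value.
  replace (1 + IZR M * (INR j + 1)) with (IZR (modulus M j))
    by (unfold modulus; rewrite plus_IZR, mult_IZR, plus_IZR, <- INR_IZR_INZ; ring).
  eapply Rle_lt_trans; [apply sigma1_decode; auto|].
  apply Rdiv_lt_swap; [apply IZR_lt, Hq | exact Heta |].
  unfold modulus. rewrite plus_IZR, mult_IZR, plus_IZR, <- INR_IZR_INZ.
  pose proof (pos_INR j). pose proof (pos_INR m). nra.
Qed.

(* [M (frac s - s - 1) = - M (j + 1)] on the window of [j], and the negative
   branch of sigma turns [2 N + 2 N sigma (- m)] into [2 N / (1 + m)]. *)
Definition decode_net (N M s : R) : R :=
  sigma (2 * N + 2 * N * sigma (M * frac_net s - M * s - M)).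

Lemma decode_net_range (N M s : R) :
  0 <= s -> 0 <= N -> 0 <= M -> 0 <= decode_net N M s <= 1.
Proof.
  intros Hs HN HM. apply sigma_range.
  pose proof (frac_net_range s Hs).
  set (y := M * frac_net s - M * s - M).
  assert (Hy : y <= 0) by (unfold y; nra).
  rewrite (sigma_nonpos y) by exact Hy.
  replace (2 * N + 2 * N * (y / (1 - y))) with (2 * N / (1 - y)) by (field; lra).
  apply Rmult_le_pos; [lra | apply Rlt_le, Rinv_0_lt_compat; lra].
Qed.

Lemma decode_net_eq (N M s : R) (j : nat) : 0 <= N -> 0 <= M ->
  INR j + 1/8 <= s <= INR j + 7/8 -> decode_net N M s = grid_value N M j.
Proof.
  intros HN HM Hs. pose proof (pos_INR j).
  unfold decode_net. rewrite (frac_net_eq s j Hs).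
  replace (M * (s - INR j) - M * s - M) with (- (M * (INR j + 1))) by ring.
  assert (0 <= M * (INR j + 1)) by (apply Rmult_le_pos; lra).
  rewrite (sigma_nonpos (- (M * (INR j + 1)))) by lra.
  replace (2 * N + 2 * N * (- (M * (INR j + 1)) / (1 - - (M * (INR j + 1)))))
    with (2 * N / (1 + M * (INR j + 1))) by (field; lra).
  apply sigma_nonneg, Rmult_le_pos; [lra | apply Rlt_le, Rinv_0_lt_compat; lra].
Qed.

Definition switch_net (t : R) : R := sigma (2 * t + 9/4) + sigma (2 * t + 7/4) - 1/2.

Lemma switch_net_0 (t : R) (j : nat) :
  INR j <= t <= INR j + 1/8 \/ INR j + 7/8 <= t <= INR j + 1 -> switch_net t = 0.
Proof.
  intros [Ht|Ht]; pose proof (pos_INR j); unfold switch_net.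
  - rewrite_tooth (2 * t + 9/4) (S j). rewrite_tooth (2 * t + 7/4) (S j). solve_abs.
  - rewrite_tooth (2 * t + 9/4) (S (S j)). rewrite_tooth (2 * t + 7/4) (S (S j)). solve_abs.
Qed.

Lemma switch_net_1 (t : R) (j : nat) : INR j + 3/8 <= t <= INR j + 5/8 -> switch_net t = 1.
Proof.
  intros Ht. pose proof (pos_INR j). unfold switch_net.
  rewrite_tooth (2 * t + 9/4) (S (S j)). rewrite_tooth (2 * t + 7/4) (S j). solve_abs.
Qed.

Lemma switch_net_range (t : R) (j : nat) :
  INR j + 1/8 <= t <= INR j + 7/8 -> 0 <= switch_net t <= 1.
Proof.
  intros Ht. pose proof (pos_INR j). unfold switch_net.
  destruct (Rle_dec t (INR j + 3/8)).
  { rewrite_tooth (2 * t + 9/4) (S j). rewrite_tooth (2 * t + 7/4) (S j). solve_abs. }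
  destruct (Rle_dec t (INR j + 5/8)).
  { rewrite_tooth (2 * t + 9/4) (S (S j)). rewrite_tooth (2 * t + 7/4) (S j). solve_abs. }
  rewrite_tooth (2 * t + 9/4) (S (S j)). rewrite_tooth (2 * t + 7/4) (S (S j)). solve_abs.
Qed.

Lemma relu_by_sigma (u : R) : -3 <= u <= 3 ->
  3/2 * (2 * sigma ((u/3 + 1) / 2) - sigma (u/3 + 1)) = Rmax 0 u.
Proof.
  intros Hu. rewrite (sigma_id ((u/3 + 1) / 2)) by lra.
  unfold Rmax; destruct Rle_dec.
  - rewrite (sigma_tooth (u/3 + 1) 1) by solve_abs. solve_abs.
  - rewrite (sigma_id (u/3 + 1)) by lra. lra.
Qed.

(* [V2] plus [V1 - V2] clipped to [[-w, w]]. *)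
Definition blend (V1 V2 w : R) : R :=
  V2 + Rmax 0 (V1 - V2 + w) - Rmax 0 (V1 - V2 - w) - w.

Definition between (u v x : R) : Prop := u <= x <= v \/ v <= x <= u.

Lemma blend_0 (V1 V2 : R) : blend V1 V2 0 = V2.
Proof. unfold blend. rewrite !Rplus_0_r, !Rminus_0_r. ring. Qed.

Lemma blend_1 (V1 V2 : R) : -1 <= V1 - V2 <= 1 -> blend V1 V2 1 = V1.
Proof. intros. unfold blend, Rmax. repeat destruct Rle_dec; lra. Qed.

Lemma blend_between (V1 V2 w : R) : 0 <= w -> between V1 V2 (blend V1 V2 w).
Proof. intros. unfold between, blend, Rmax. repeat destruct Rle_dec; lra. Qed.

Lemma between_Rabs_lt (u v x a b c d : R) : 0 <= a -> between u v x ->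
  Rabs (a * u - b - c) < d -> Rabs (a * v - b - c) < d -> Rabs (a * x - b - c) < d.
Proof.
  intros Ha Hx Hu%Rabs_def2 Hv%Rabs_def2. apply Rabs_def1;
  destruct Hx as [[Hx1 Hx2]|[Hx1 Hx2]];
  apply (Rmult_le_compat_l a) in Hx1, Hx2; lra.
Qed.

Lemma nat_floor (t : R) : 0 <= t -> exists j : nat, INR j <= t < INR j + 1.
Proof.
  intros Ht. destruct (base_Int_part t) as [H1 H2].
  assert (Hk : (-1 < Int_part t)%Z) by (apply lt_IZR; lra).
  exists (Z.to_nat (Int_part t)). rewrite INR_IZR_INZ, Z2Nat.id by lia. lra.
Qed.

(* The windows [j + 1/8, j + 7/8] of [t] and of [t + 1/2] cover every point,
   and [switch_net] selects whichever copy is inside its window. *)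
Lemma blend_decode_between (N M t : R) (J : nat) :
  0 <= N -> 0 <= M -> 0 <= t <= INR J ->
  exists j1 j2, (j1 <= J)%nat /\ (j2 <= J)%nat /\
    Rabs (t - INR j1) <= 1 /\ Rabs (t - INR j2) <= 1 /\
    between (grid_value N M j1) (grid_value N M j2)
      (blend (decode_net N M t) (decode_net N M (t + 1/2)) (switch_net t)).
Proof.
  intros HN HM Ht.
  destruct (nat_floor t) as [j Hj]; [lra|].
  assert (HjJ : (j <= J)%nat) by (apply INR_le; lra).
  assert (HSjJ : INR j + 1/8 < t -> (S j <= J)%nat) by (intros; apply INR_lt; lra).
  assert (Hnear : Rabs (t - INR j) <= 1 /\ Rabs (t - INR (S j)) <= 1) by (split; solve_abs).
  assert (HV : -1 <= decode_net N M t - decode_net N M (t + 1/2) <= 1).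
  { pose proof (decode_net_range N M t ltac:(lra) HN HM).
    pose proof (decode_net_range N M (t + 1/2) ltac:(lra) HN HM). lra. }
  destruct (Rle_lt_dec (t - INR j) (1/8)).
  { exists j, j. rewrite (switch_net_0 t j), blend_0, (decode_net_eq N M (t + 1/2) j) by lra.
    repeat split; try tauto; left; lra. }
  destruct (Rle_lt_dec (t - INR j) (3/8)).
  { exists j, j. pose proof (switch_net_range t j ltac:(lra)).
    rewrite (decode_net_eq N M t j), (decode_net_eq N M (t + 1/2) j) by lra.
    repeat split; try tauto. apply blend_between; lra. }
  destruct (Rle_lt_dec (t - INR j) (5/8)).
  { exists j, j. rewrite (switch_net_1 t j), blend_1, (decode_net_eq N M t j) by lra.
    repeat split; try tauto; left; lra. }
  destruct (Rle_lt_dec (t - INR j) (7/8)).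
  { exists j, (S j). pose proof (switch_net_range t j ltac:(lra)). pose proof (HSjJ ltac:(lra)).
    rewrite (decode_net_eq N M t j), (decode_net_eq N M (t + 1/2) (S j))
      by (rewrite ?S_INR; lra).
    repeat split; try tauto. apply blend_between; lra. }
  exists (S j), (S j). pose proof (HSjJ ltac:(lra)).
  rewrite (switch_net_0 t j), blend_0, (decode_net_eq N M (t + 1/2) (S j))
    by (rewrite ?S_INR; lra).
  repeat split; try tauto; left; lra.
Qed.

Definition net_output (N M C t : R) : R :=
  2 * C * blend (decode_net N M t) (decode_net N M (t + 1/2)) (switch_net t) - C.

Lemma net_output_approx (J : nat) (y : nat -> R) (C eta : R) :
  0 < C -> 0 < eta -> (forall j, (j <= J)%nat -> Rabs (y j) <= C) ->
  exists N M, 0 <= N /\ 0 <= M /\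
    forall t c e, 0 <= t <= INR J ->
      (forall j, (j <= J)%nat -> Rabs (t - INR j) <= 1 -> Rabs (y j - c) < e) ->
      Rabs (net_output N M C t - c) < e + eta.
Proof.
  intros HC Heta Hy.
  destruct (grid_values_interpolate J (fun j => (y j + C) / (2 * C)) (eta / (2 * C)))
    as [N [M [HN [HM Hgrid]]]].
  { apply Rdiv_lt_0_compat; lra. }
  { intros j Hj. specialize (Hy j Hj).
    assert (Hyj : - C <= y j <= C) by (revert Hy; solve_abs). split.
    - apply Rmult_le_pos; [lra | apply Rlt_le, Rinv_0_lt_compat; lra].
    - apply Rmult_le_reg_r with (2 * C); [lra|]. field_simplify; lra. }
  exists N, M. repeat split; [exact HN | exact HM |].
  intros t c e Ht Hnear.
  destruct (blend_decode_between N M t J HN HM Ht) as [j1 [j2 [Hj1 [Hj2 [Ht1 [Ht2 Hb]]]]]].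
  assert (Hgood : forall j, (j <= J)%nat -> Rabs (t - INR j) <= 1 ->
            Rabs (2 * C * grid_value N M j - C - c) < e + eta).
  { intros j Hj Htj. specialize (Hgrid j Hj). specialize (Hnear j Hj Htj).
    replace (2 * C * grid_value N M j - C - c)
      with (2 * C * (grid_value N M j - (y j + C) / (2 * C)) + (y j - c)) by (field; lra).
    eapply Rle_lt_trans; [apply Rabs_triang|].
    rewrite Rabs_mult, (Rabs_pos_eq (2 * C)) by lra.
    apply (Rmult_lt_compat_l (2 * C)) in Hgrid; [|lra].
    replace (2 * C * (eta / (2 * C))) with eta in Hgrid by (field; lra). lra. }
  unfold net_output.
  apply (between_Rabs_lt (grid_value N M j1) (grid_value N M j2)); auto. lra.
Qed.

Definition layer_of (rows : list (list R)) (biases : list R) : layer :=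
  mkLayer (fun i j => nth j (nth i rows nil) 0) (fun i => nth i biases 0).

Definition vec_eq (X : nat -> R) (l : list R) : Prop :=
  forall i, (i < length l)%nat -> X i = nth i l 0.

(* Values in [0, 1] pass through sigma unchanged; this is how [t / (Jr + 1)]
   and [(switch_net t + 1/2) / 2] are carried to the layers that use them. *)
Definition layer1 (al be Jr : R) : layer := layer_of
  [[al]; [al]; [al]; [al]; [al]; [al]; [2 * al]; [2 * al]; [al / (Jr + 1)]]
  [be + 17/8; be + 15/8; be + 2; be + 21/8; be + 19/8; be + 5/2;
   2 * be + 9/4; 2 * be + 7/4; be / (Jr + 1)].
Definition layer2 : layer := layer_of
  [[2; -2; 1]; [0; 0; 0; 2; -2; 1]; [0; 0; 0; 0; 0; 0; 0; 0; 1]; [0; 0; 0; 0; 0; 0; 1/2; 1/2]]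
  [7/2; 7/2; 0; 0].
Definition layer3 (Jr M : R) : layer := layer_of
  [[M; 0; - M * (Jr + 1)]; [0; M; - M * (Jr + 1)]; [0; 0; 0; 1]]
  [- M; -3/2 * M; 0].
Definition layer4 (N : R) : layer := layer_of
  [[2 * N]; [0; 2 * N]; [0; 0; 1]]
  [2 * N; 2 * N; 0].
Definition layer5 : layer := layer_of
  [[1/3; -1/3; 2/3]; [1/6; -1/6; 1/3]; [1/3; -1/3; -2/3]; [1/6; -1/6; -1/3]; [0; 1]; [0; 0; 1]]
  [5/6; 5/12; 7/6; 7/12; 0; 0].
Definition output_layer (C : R) : layer := layer_of
  [[-3 * C; 6 * C; 3 * C; -6 * C; 2 * C; -4 * C]] [0].

Definition hidden_layers (al be Jr N M : R) : list (nat * layer) :=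
  [(9%nat, layer1 al be Jr); (4%nat, layer2); (3%nat, layer3 Jr M); (3%nat, layer4 N);
   (6%nat, layer5)].

Definition net (al be Jr N M C : R) (X : nat -> R) : R :=
  affine (fst (eval_hidden 1 (hidden_layers al be Jr N M) X)) (output_layer C)
         (snd (eval_hidden 1 (hidden_layers al be Jr N M) X)) 0.

Lemma net_shape (al be Jr N M C : R) : sigma_net 1 36 5 (net al be Jr N M C).
Proof.
  exists (hidden_layers al be Jr N M), (output_layer C).
  repeat split; [simpl; lia | repeat constructor; simpl; lia].
Qed.

Lemma sigma_eq_id (y x : R) : y = x -> 0 <= x <= 1 -> sigma y = x.
Proof. intros -> Hx. apply sigma_id, Hx. Qed.

Lemma ratio_unit (t Jr : R) : 0 <= t <= Jr -> 0 <= t / (Jr + 1) <= 1.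
Proof.
  intros Ht. split.
  - apply Rmult_le_pos; [lra | apply Rlt_le, Rinv_0_lt_compat; lra].
  - apply Rmult_le_reg_r with (Jr + 1); [lra|]. field_simplify; lra.
Qed.

Ltac eval_row L := unfold affine, L, layer_of; cbn [fsum nth lW lb].
Ltac eval_row_from L HX := eval_row L; rewrite ?HX by (simpl; lia); cbn [nth].

Lemma layer1_eval (al be Jr x : R) : let t := al * x + be in 0 <= t <= Jr ->
  vec_eq (fun i => sigma (affine 1 (layer1 al be Jr) (fun _ => x) i))
    [sigma (t + 17/8); sigma (t + 15/8); sigma (t + 2);
     sigma (t + 1/2 + 17/8); sigma (t + 1/2 + 15/8); sigma (t + 1/2 + 2);
     sigma (2 * t + 9/4); sigma (2 * t + 7/4); t / (Jr + 1)].
Proof.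
  intros t Ht i Hi. cbn [length] in Hi.
  do 8 (destruct i as [|i]; [eval_row layer1; unfold t; f_equal; field; lra|]).
  destruct i as [|i]; [|lia].
  eval_row layer1. apply sigma_eq_id; [unfold t; field; lra | now apply ratio_unit].
Qed.

Lemma layer2_eval (t Jr : R) (X : nat -> R) : 0 <= t <= Jr ->
  vec_eq X
    [sigma (t + 17/8); sigma (t + 15/8); sigma (t + 2);
     sigma (t + 1/2 + 17/8); sigma (t + 1/2 + 15/8); sigma (t + 1/2 + 2);
     sigma (2 * t + 9/4); sigma (2 * t + 7/4); t / (Jr + 1)] ->
  vec_eq (fun i => sigma (affine 9 layer2 X i))
    [frac_net t; frac_net (t + 1/2); t / (Jr + 1); (switch_net t + 1/2) / 2].
Proof.
  intros Ht HX i Hi. cbn [length] in Hi.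
  pose proof (sigma_range (2 * t + 9/4) ltac:(lra)).
  pose proof (sigma_range (2 * t + 7/4) ltac:(lra)).
  do 2 (destruct i as [|i]; [eval_row_from layer2 HX; unfold frac_net; f_equal; ring|]).
  destruct i as [|i]; [eval_row_from layer2 HX; apply sigma_eq_id; [ring | now apply ratio_unit]|].
  destruct i as [|i]; [|lia].
  eval_row_from layer2 HX. apply sigma_eq_id; unfold switch_net; [field; lra | lra].
Qed.

Lemma layer3_eval (t Jr M c : R) (X : nat -> R) : 0 <= t <= Jr -> 0 <= c <= 1 ->
  vec_eq X [frac_net t; frac_net (t + 1/2); t / (Jr + 1); c] ->
  vec_eq (fun i => sigma (affine 4 (layer3 Jr M) X i))
    [sigma (M * frac_net t - M * t - M); sigma (M * frac_net (t + 1/2) - M * (t + 1/2) - M); c].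
Proof.
  intros Ht Hc HX i Hi. cbn [length] in Hi.
  do 2 (destruct i as [|i]; [eval_row_from layer3 HX; f_equal; field; lra|]).
  destruct i as [|i]; [|lia].
  eval_row_from layer3 HX. apply sigma_eq_id; [ring | exact Hc].
Qed.

Lemma layer4_eval (t N M c : R) (X : nat -> R) : 0 <= c <= 1 ->
  vec_eq X [sigma (M * frac_net t - M * t - M); sigma (M * frac_net (t + 1/2) - M * (t + 1/2) - M); c] ->
  vec_eq (fun i => sigma (affine 3 (layer4 N) X i))
    [decode_net N M t; decode_net N M (t + 1/2); c].
Proof.
  intros Hc HX i Hi. cbn [length] in Hi.
  do 2 (destruct i as [|i]; [eval_row_from layer4 HX; unfold decode_net; f_equal; ring|]).
  destruct i as [|i]; [|lia].
  eval_row_from layer4 HX. apply sigma_eq_id; [ring | exact Hc].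
Qed.

Lemma layer5_eval (V1 V2 w : R) (X : nat -> R) : 0 <= V2 <= 1 -> 0 <= (w + 1/2) / 2 <= 1 ->
  vec_eq X [V1; V2; (w + 1/2) / 2] ->
  vec_eq (fun i => sigma (affine 3 layer5 X i))
    [sigma ((V1 - V2 + w) / 3 + 1); sigma (((V1 - V2 + w) / 3 + 1) / 2);
     sigma ((V1 - V2 - w) / 3 + 1); sigma (((V1 - V2 - w) / 3 + 1) / 2);
     V2; (w + 1/2) / 2].
Proof.
  intros HV2 Hw HX i Hi. cbn [length] in Hi.
  do 4 (destruct i as [|i]; [eval_row_from layer5 HX; f_equal; field|]).
  destruct i as [|i]; [eval_row_from layer5 HX; apply sigma_eq_id; [ring | exact HV2]|].
  destruct i as [|i]; [|lia].
  eval_row_from layer5 HX. apply sigma_eq_id; [ring | exact Hw].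
Qed.

Lemma output_eval (V1 V2 w C : R) (X : nat -> R) :
  0 <= V1 <= 1 -> 0 <= V2 <= 1 -> -1/2 <= w <= 3/2 ->
  vec_eq X
    [sigma ((V1 - V2 + w) / 3 + 1); sigma (((V1 - V2 + w) / 3 + 1) / 2);
     sigma ((V1 - V2 - w) / 3 + 1); sigma (((V1 - V2 - w) / 3 + 1) / 2);
     V2; (w + 1/2) / 2] ->
  affine 6 (output_layer C) X 0 = 2 * C * blend V1 V2 w - C.
Proof.
  intros HV1 HV2 Hw HX. eval_row_from output_layer HX.
  unfold blend. rewrite <- !relu_by_sigma by lra. field.
Qed.

Lemma net_eval (al be Jr N M C x : R) : 0 <= al * x + be <= Jr -> 0 <= N -> 0 <= M ->
  net al be Jr N M C (fun _ => x) = net_output N M C (al * x + be).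
Proof.
  intros Ht HN HM. set (t := al * x + be) in *.
  pose proof (sigma_range (2 * t + 9/4) ltac:(lra)).
  pose proof (sigma_range (2 * t + 7/4) ltac:(lra)).
  pose proof (decode_net_range N M t ltac:(lra) HN HM).
  pose proof (decode_net_range N M (t + 1/2) ltac:(lra) HN HM).
  assert (Hw : 0 <= (switch_net t + 1/2) / 2 <= 1) by (unfold switch_net; lra).
  unfold net, net_output. cbn [eval_hidden hidden_layers fst snd].
  apply output_eval; [lra | lra | unfold switch_net; lra |].
  apply layer5_eval; [lra | exact Hw |].
  apply layer4_eval; [exact Hw |].
  apply layer3_eval; [exact Ht | exact Hw |].
  apply layer2_eval; [exact Ht |].
  now apply layer1_eval.
Qed.

Definition clamp (a b y : R) : R := Rmax a (Rmin y b).

Lemma clamp_in (a b y : R) : a < b -> a <= clamp a b y <= b.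
Proof. intros. unfold clamp, Rmax, Rmin. repeat destruct Rle_dec; lra. Qed.

Lemma clamp_id (a b y : R) : a <= y <= b -> clamp a b y = y.
Proof. intros. unfold clamp, Rmax, Rmin. repeat destruct Rle_dec; lra. Qed.

Lemma clamp_dist (a b x y : R) : a <= x <= b -> Rabs (clamp a b y - x) <= Rabs (y - x).
Proof. intros. unfold clamp, Rmax, Rmin. repeat destruct Rle_dec; solve_abs. Qed.

(* Heine's theorem applies to [f] composed with the clamp, which is continuous
   at every point of [[a, b]] in the two-sided sense. *)
Lemma cont_on_interval_uniform (f : R -> R) (a b e : R) :
  a < b -> cont_on_interval f a b -> 0 < e ->
  exists del, 0 < del /\ forall x y, a <= x <= b -> a <= y <= b ->
    Rabs (x - y) < del -> Rabs (f x - f y) < e.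
Proof.
  intros Hab Hf He.
  assert (Hcont : forall x, a <= x <= b -> continuity_pt (fun y => f (clamp a b y)) x).
  { intros x Hx e' He'. destruct (Hf x Hx e' He') as [al [Hal Hcl]].
    exists al. split; [exact Hal|]. intros y [_ Hy]. simpl in *. unfold R_dist in *.
    rewrite (clamp_id a b x Hx). apply Hcl. split; [now apply clamp_in|].
    unfold R_dist. pose proof (clamp_dist a b x y Hx). lra. }
  destruct (@Heine_cor2 _ a b Hcont (mkposreal e He)) as [del Hdel].
  exists del. split; [apply cond_pos|]. intros x y Hx Hy Hxy.
  specialize (Hdel x y Hx Hy Hxy). simpl in Hdel.
  rewrite (clamp_id a b x Hx), (clamp_id a b y Hy) in Hdel. exact Hdel.
Qed.

Lemma cont_on_interval_grid (f : R -> R) (a b e : R) :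
  a < b -> cont_on_interval f a b -> 0 < e ->
  exists J : nat, (0 < J)%nat /\ forall x j, a <= x <= b -> (j <= J)%nat ->
    Rabs (INR J / (b - a) * (x - a) - INR j) <= 1 ->
    Rabs (f (a + (b - a) / INR J * INR j) - f x) < e.
Proof.
  intros Hab Hf He.
  destruct (cont_on_interval_uniform f a b e Hab Hf He) as [del [Hdel Hunif]].
  destruct (INR_unbounded ((b - a) / del)) as [J HJ].
  assert (HJ0 : 0 < INR J) by (pose proof (Rdiv_lt_0_compat (b - a) del); lra).
  exists J. split; [now apply INR_lt|].
  intros x j Hx Hj Hxj.
  set (h := (b - a) / INR J).
  assert (Hh : 0 < h < del).
  { split; [apply Rdiv_lt_0_compat; lra | apply Rdiv_lt_swap; lra]. }
  apply Hunif; [| exact Hx |].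
  - assert (0 <= h * INR j) by (apply Rmult_le_pos; [lra | apply pos_INR]).
    assert (h * INR j <= h * INR J) by (apply Rmult_le_compat_l; [lra | apply le_INR; exact Hj]).
    replace (h * INR J) with (b - a) in * by (unfold h; field; lra). lra.
  - replace (a + h * INR j - x) with (- h * (INR J / (b - a) * (x - a) - INR j))
      by (unfold h; field; lra).
    rewrite Rabs_mult, Rabs_Ropp, (Rabs_pos_eq h) by lra. nra.
Qed.

Lemma rescale_range (a b x : R) (J : nat) :
  a < b -> a <= x <= b -> 0 <= INR J / (b - a) * (x - a) <= INR J.
Proof.
  intros Hab Hx. pose proof (pos_INR J).
  replace (INR J / (b - a) * (x - a)) with (INR J * ((x - a) / (b - a))) by (field; lra).
  assert (0 <= (x - a) / (b - a) <= 1).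
  { split; [apply Rmult_le_pos; [lra | apply Rlt_le, Rinv_0_lt_compat; lra]|].
    apply Rmult_le_reg_r with (b - a); [lra|]. field_simplify; lra. }
  nra.
Qed.

Lemma finite_bound (y : nat -> R) (J : nat) :
  exists C, 0 < C /\ forall j, (j <= J)%nat -> Rabs (y j) <= C.
Proof.
  induction J as [|J [C [HC HyC]]].
  - exists (Rabs (y 0%nat) + 1). split; [pose proof (Rabs_pos (y 0%nat)); lra|].
    intros j Hj. replace j with 0%nat by lia. lra.
  - exists (Rmax C (Rabs (y (S J)))). split; [eapply Rlt_le_trans; [exact HC | apply Rmax_l]|].
    intros j Hj. destruct (Nat.eq_dec j (S J)) as [->|Hne]; [apply Rmax_r|].
    eapply Rle_trans; [apply HyC; lia | apply Rmax_l].
Qed.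

Theorem theorem6 (a b : R) (f : R -> R) :
  a < b -> cont_on_interval f a b ->
  forall eps : R, eps > 0 ->
  exists g : (nat -> R) -> R,
    sigma_net 1 36 5 g /\
    forall x : R, a <= x <= b -> Rabs (g (fun _ => x) - f x) < eps.
Proof.
  intros Hab Hf eps Heps.
  destruct (cont_on_interval_grid f a b (eps / 2) Hab Hf) as [J [HJ Hgrid]]; [lra|].
  set (y := fun j => f (a + (b - a) / INR J * INR j)).
  destruct (finite_bound y J) as [C [HC Hy]].
  destruct (net_output_approx J y C (eps / 2) HC ltac:(lra) Hy) as [N [M [HN [HM Happrox]]]].
  set (alpha := INR J / (b - a)).
  exists (net alpha (- alpha * a) (INR J) N M C). split; [apply net_shape|].
  intros x Hx.
  pose proof (rescale_range a b x J Hab Hx) as Ht.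
  rewrite net_eval by (fold alpha in Ht; lra).
  replace (alpha * x + - alpha * a) with (alpha * (x - a)) by ring.
  replace eps with (eps / 2 + eps / 2) by field.
  apply Happrox; [exact Ht|].
  intros j Hj Htj. apply Hgrid; assumption.
Qed.
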